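(* Let $\mathcal{H}$ be a finite-dimensional Hilbert space and let $\mathcal{A}$ be a deterministic map sending every unitary $U$ on $\mathcal{H}$ to an operator $\mathcal{A}(U)$ with $\|\mathcal{A}(U)\|_\infty=1$, which is $K$-Lipschitz in the sense that $\|\mathcal{A}(U_1)-\mathcal{A}(U_2)\|_\infty\le K\|U_1-U_2\|_\infty$ for all unitaries $U_1,U_2$. Let $|\psi\rangle,|\varphi\rangle\in\mathcal{H}$ be fixed unit vectors. Then the function $$F(U):=F\big(U|\psi\rangle,\mathcal{A}(U)|\varphi\rangle\big)=\big|\langle\psi|U^\dagger\mathcal{A}(U)|\varphi\rangle\big|^2$$ is $(2+2K)$-Lipschitz in $U$: $|F(U_1)-F(U_2)|\le(2+2K)\|U_1-U_2\|_2$ for all unitaries $U_1,U_2$, where $\|X\|_2=\sqrt{\mathrm{tr}X^\dagger X}$.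
   Context: $\|\cdot\|_\infty$ denotes the operator norm. In this part of the paper, operators output by the map are taken to be exactly norm-preserving, i.e. $\|\mathcal{A}(U)\|_\infty=1$. *)

From HB Require Import structures.
From mathcomp Require Import all_boot all_order all_algebra.
From mathcomp Require Import complex.
From mathcomp Require Import classical_sets reals.
Set Implicit Arguments. Unset Strict Implicit. Unset Printing Implicit Defensive.
Import Order.TTheory GRing.Theory Num.Theory.
Local Open Scope ring_scope.
Local Open Scope classical_set_scope.

(* Hilbert space H = C^n with C = R[i], R a real field (realType). *)

Definition adjmx (R : realType) m n (A : 'M[R[i]]_(m, n)) : 'M[R[i]]_(n, m) :=
  (map_mx (@conjc R) A)^T.

Definition vnorm (R : realType) n (v : 'cV[R[i]]_n) : R :=
  Num.sqrt (complex.Re ((adjmx v *m v) 0 0)).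

Definition opnorm (R : realType) n (A : 'M[R[i]]_n) : R :=
  sup [set vnorm (A *m v) | v in [set v : 'cV[R[i]]_n | vnorm v = 1]].

Definition hsnorm (R : realType) n (X : 'M[R[i]]_n) : R :=
  Num.sqrt (complex.Re (\tr (adjmx X *m X))).

Definition unitary (R : realType) n (U : 'M[R[i]]_n) : Prop :=
  adjmx U *m U = 1%:M.

Definition fid (R : realType) n (A : 'M[R[i]]_n -> 'M[R[i]]_n)
  (psi phi : 'cV[R[i]]_n) (U : 'M[R[i]]_n) : R :=
  ComplexField.Normc.normc ((adjmx psi *m adjmx U *m A U *m phi) 0 0) ^+ 2.

(* Put a(U) = <U psi | A(U) phi>, so that the fidelity is |a(U)|^2.  By
   Cauchy-Schwarz |a(U)| <= 1, and splitting
     a(U1) - a(U2) = <(U1 - U2) psi | A(U1) phi> + <U2 psi | (A(U1) - A(U2)) phi>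
   gives |a(U1) - a(U2)| <= (1 + K) ||U1 - U2||_oo <= (1 + K) ||U1 - U2||_2.
   Squaring is 2-Lipschitz on [0, 1], which doubles the constant.  The last
   step needs K >= 0, which comparing U = 1 with U = -1 forces. *)

From HB Require Import structures.
From mathcomp Require Import all_boot all_order all_algebra.
From mathcomp Require Import complex.
From mathcomp Require Import classical_sets reals.
From mathcomp Require Import ring.
Set Implicit Arguments. Unset Strict Implicit. Unset Printing Implicit Defensive.
Import Order.TTheory GRing.Theory Num.Theory.
Local Open Scope ring_scope.
Import ComplexField.Normc.

Lemma CauchySchwarz_sum (R : realFieldType) (I : finType) (a b : I -> R) :
  (\sum_i a i * b i) ^+ 2 <= (\sum_i a i ^+ 2) * (\sum_i b i ^+ 2).
Proof.
set Sab := \sum_i a i * b i.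
set Saa := \sum_i a i ^+ 2; set Sbb := \sum_i b i ^+ 2.
have lagrange :
    \sum_i \sum_j (a i * b j - a j * b i) ^+ 2 = 2 * (Saa * Sbb - Sab ^+ 2).
  have -> : Saa * Sbb = \sum_i \sum_j a i ^+ 2 * b j ^+ 2
    by rewrite big_distrlr.
  have -> : Sab ^+ 2 = \sum_i \sum_j (a i * b i) * (a j * b j)
    by rewrite expr2 big_distrlr.
  rewrite mulrBr mulr2n mulrDl mul1r.
  rewrite {2}(exchange_big _ _ _ _ _ (fun i j => a i ^+ 2 * b j ^+ 2)) /=.
  rewrite mulr_sumr -!big_split -sumrB; apply: eq_bigr => i _.
  rewrite mulr_sumr -!big_split -sumrB; apply: eq_bigr => j _ /=; ring.
have : 0 <= \sum_i \sum_j (a i * b j - a j * b i) ^+ 2.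
  by apply: sumr_ge0 => i _; apply: sumr_ge0 => j _; exact: sqr_ge0.
by rewrite lagrange pmulr_rge0 ?ltr0n // subr_ge0.
Qed.

Lemma sqr_dist_le (R : numDomainType) (x y : R) :
  0 <= x <= 1 -> 0 <= y <= 1 -> `|x ^+ 2 - y ^+ 2| <= 2 * `|x - y|.
Proof.
move=> /andP[x0 x1] /andP[y0 y1].
rewrite subr_sqr normrM mulrC ler_wpM2r // ger0_norm ?addr_ge0 //.
by rewrite -[2]/(1 + 1) lerD.
Qed.

Section ComplexNorm.
Variable R : realType.
Local Notation C := R[i].

Lemma normc_ge0 (x : C) : 0 <= normc x.
Proof. exact: (@normr_ge0 _ (Rcomplex R)). Qed.

Lemma normcJ (x : C) : normc (conjc x) = normc x.
Proof. by case: x => a b /=; rewrite sqrrN. Qed.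

Lemma normc_sqrE (x : C) : normc x ^+ 2 = complex.Re (conjc x * x).
Proof.
by case: x => a b /=; rewrite sqr_sqrtr ?addr_ge0 ?sqr_ge0 // !expr2; ring.
Qed.

Lemma ler_dist_normc (x y : C) : `|normc x - normc y| <= normc (x - y).
Proof. exact: (@ler_dist_dist _ (Rcomplex R)). Qed.

Lemma CauchySchwarz_normc (I : finType) (x y : I -> C) :
  normc (\sum_i x i * y i) ^+ 2 <=
  (\sum_i normc (x i) ^+ 2) * (\sum_i normc (y i) ^+ 2).
Proof.
pose nx i := normc (x i); pose ny i := normc (y i).
apply: le_trans (CauchySchwarz_sum nx ny).
rewrite ler_sqr ?nnegrE ?normc_ge0 ?sumr_ge0 // => [|i _]; last first.
  by rewrite mulr_ge0 ?normc_ge0.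
apply: le_trans (@ler_norm_sum _ (Rcomplex R) _ _ _ _) _.
by apply: ler_sum => i _; rewrite -normcM.
Qed.

End ComplexNorm.

Section Adjoint.
Variable R : realType.
Local Notation C := R[i].

Lemma adjmxM m n p (X : 'M[C]_(m, n)) (Y : 'M[C]_(n, p)) :
  adjmx (X *m Y) = adjmx Y *m adjmx X.
Proof. by rewrite /adjmx map_mxM trmx_mul. Qed.

Lemma adjmxB m n (X Y : 'M[C]_(m, n)) : adjmx (X - Y) = adjmx X - adjmx Y.
Proof. by rewrite /adjmx map_mxB linearB. Qed.

Lemma adjmxN m n (X : 'M[C]_(m, n)) : adjmx (- X) = - adjmx X.
Proof. by rewrite /adjmx map_mxN linearN. Qed.

End Adjoint.

Section Vectors.
Variables (R : realType) (n : nat).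
Local Notation C := R[i].

Definition inner (u w : 'cV[C]_n) : C := (adjmx u *m w) 0 0.

Lemma innerE u w : inner u w = \sum_i conjc (u i 0) * w i 0.
Proof. by rewrite /inner !mxE; apply: eq_bigr => i _; rewrite !mxE. Qed.

Lemma innerBl u1 u2 w : inner (u1 - u2) w = inner u1 w - inner u2 w.
Proof. by rewrite /inner adjmxB mulmxBl !mxE. Qed.

Lemma innerBr u w1 w2 : inner u (w1 - w2) = inner u w1 - inner u w2.
Proof. by rewrite /inner mulmxBr !mxE. Qed.

Lemma vnorm_sqr (v : 'cV[C]_n) : vnorm v ^+ 2 = \sum_i normc (v i 0) ^+ 2.
Proof.
have Re_inner : complex.Re (inner v v) = \sum_i normc (v i 0) ^+ 2.
  by rewrite innerE raddf_sum; apply: eq_bigr => i _; rewrite normc_sqrE.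
rewrite /vnorm -/(inner v v) Re_inner sqr_sqrtr // sumr_ge0 // => i _.
exact: sqr_ge0.
Qed.

Lemma vnorm_ge0 (v : 'cV[C]_n) : 0 <= vnorm v.
Proof. exact: sqrtr_ge0. Qed.

Lemma normc_inner_le (u w : 'cV[C]_n) : normc (inner u w) <= vnorm u * vnorm w.
Proof.
rewrite -ler_sqr ?nnegrE ?normc_ge0 ?mulr_ge0 ?vnorm_ge0 //.
rewrite exprMn !vnorm_sqr innerE.
under [X in _ <= X * _]eq_bigr do rewrite -normcJ.
exact: CauchySchwarz_normc.
Qed.

Lemma vnormZ c (v : 'cV[C]_n) : vnorm (c *: v) = normc c * vnorm v.
Proof.
apply/eqP; rewrite -(eqrXn2 (n := 2)) ?mulr_ge0 ?normc_ge0 ?vnorm_ge0 //.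
rewrite exprMn !vnorm_sqr mulr_sumr; apply/eqP/eq_bigr => i _.
by rewrite mxE normcM exprMn.
Qed.

Lemma vnorm_unitary (U : 'M[C]_n) (v : 'cV[C]_n) :
  unitary U -> vnorm (U *m v) = vnorm v.
Proof.
by move=> hU; rewrite /vnorm adjmxM mulmxA -(mulmxA (adjmx v)) hU mulmx1.
Qed.

Lemma hsnorm_sqr (X : 'M[C]_n) :
  hsnorm X ^+ 2 = \sum_i \sum_j normc (X i j) ^+ 2.
Proof.
have Re_tr : complex.Re (\tr (adjmx X *m X)) = \sum_j \sum_i normc (X i j) ^+ 2.
  rewrite raddf_sum; apply: eq_bigr => j _.
  rewrite mxE raddf_sum; apply: eq_bigr => i _.
  by rewrite !mxE normc_sqrE.
rewrite /hsnorm Re_tr sqr_sqrtr; first exact: exchange_big.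
by apply: sumr_ge0 => j _; apply: sumr_ge0 => i _; exact: sqr_ge0.
Qed.

Lemma vnorm_mulmx_le (X : 'M[C]_n) (v : 'cV[C]_n) :
  vnorm (X *m v) <= hsnorm X * vnorm v.
Proof.
rewrite -ler_sqr ?nnegrE ?mulr_ge0 ?vnorm_ge0 ?sqrtr_ge0 //.
rewrite exprMn !vnorm_sqr hsnorm_sqr mulr_suml; apply: ler_sum => i _.
rewrite mxE; exact: CauchySchwarz_normc.
Qed.

Lemma vnorm_mulmx_le_opnorm (X : 'M[C]_n) (v : 'cV[C]_n) :
  vnorm v = 1 -> vnorm (X *m v) <= opnorm X.
Proof.
move=> v1; apply: ub_le_sup; last by exists v.
exists (hsnorm X) => _ [w /= w1 <-].
by rewrite -[hsnorm X]mulr1 -w1 vnorm_mulmx_le.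
Qed.

(* Without a unit vector (n = 0), [opnorm] is the supremum of the empty set. *)
Variable e : 'cV[C]_n.
Hypothesis e1 : vnorm e = 1.

Lemma opnorm_ge0 (X : 'M[C]_n) : 0 <= opnorm X.
Proof. exact: le_trans (vnorm_ge0 _) (vnorm_mulmx_le_opnorm X e1). Qed.

Lemma opnorm_le_hsnorm (X : 'M[C]_n) : opnorm X <= hsnorm X.
Proof.
apply: ge_sup; first by exists (vnorm (X *m e)), e.
by move=> _ [w /= w1 <-]; rewrite -[hsnorm X]mulr1 -w1 vnorm_mulmx_le.
Qed.

Lemma unitary1 : unitary (1%:M : 'M[C]_n).
Proof.
by rewrite /unitary /adjmx map_scalar_mx tr_scalar_mx rmorph1 mul1mx.
Qed.

Lemma unitaryN (U : 'M[C]_n) : unitary U -> unitary (- U).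
Proof. by rewrite /unitary adjmxN mulNmx mulmxN opprK. Qed.

Lemma lipschitz_const_ge0 (f : 'M[C]_n -> 'M[C]_n) (K : R) :
  (forall U1 U2, unitary U1 -> unitary U2 ->
     opnorm (f U1 - f U2) <= K * opnorm (U1 - U2)) -> 0 <= K.
Proof.
move=> f_lip; have := f_lip _ _ unitary1 (unitaryN unitary1).
have op2_gt0 : 0 < opnorm (1%:M - - 1%:M : 'M[C]_n).
  apply: lt_le_trans (vnorm_mulmx_le_opnorm _ e1).
  rewrite opprK mulmxDl mul1mx -mulr2n -scaler_nat vnormZ e1 mulr1.
  by rewrite -[2]/(1 *+ 2) normcMn normc1.
by rewrite -(pmulr_lge0 _ op2_gt0); apply: le_trans (opnorm_ge0 _).
Qed.

End Vectors.

Section Fidelity.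
Variables (R : realType) (n : nat) (A : 'M[R[i]]_n -> 'M[R[i]]_n) (K : R).
Variables (psi phi : 'cV[R[i]]_n).
Hypothesis A_norm1 : forall U, unitary U -> opnorm (A U) = 1.
Hypothesis A_lip : forall U1 U2, unitary U1 -> unitary U2 ->
  opnorm (A U1 - A U2) <= K * opnorm (U1 - U2).
Hypotheses (psi1 : vnorm psi = 1) (phi1 : vnorm phi = 1).

Local Notation amplitude U := (inner (U *m psi) (A U *m phi)).

Lemma fidE U : fid A psi phi U = normc (amplitude U) ^+ 2.
Proof. by rewrite /fid /inner adjmxM !mulmxA. Qed.

Lemma normc_amplitude_in01 U : unitary U -> 0 <= normc (amplitude U) <= 1.
Proof.
move=> hU; rewrite normc_ge0; apply: le_trans (normc_inner_le _ _) _.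
by rewrite vnorm_unitary // psi1 mul1r -(A_norm1 hU) vnorm_mulmx_le_opnorm.
Qed.

Lemma normc_amplitudeB_le U1 U2 : unitary U1 -> unitary U2 ->
  normc (amplitude U1 - amplitude U2) <= (1 + K) * opnorm (U1 - U2).
Proof.
move=> hU1 hU2.
have -> : amplitude U1 - amplitude U2 =
    inner ((U1 - U2) *m psi) (A U1 *m phi) +
    inner (U2 *m psi) ((A U1 - A U2) *m phi).
  by rewrite !mulmxBl innerBl innerBr addrA subrK.
apply: le_trans (le_normcD _ _) _; rewrite mulrDl mul1r.
apply: lerD; apply: le_trans (normc_inner_le _ _) _.
- rewrite -[X in _ <= X]mulr1 -(A_norm1 hU1).
  by apply: ler_pM; rewrite ?vnorm_ge0 ?vnorm_mulmx_le_opnorm.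
- rewrite vnorm_unitary // psi1 mul1r.
  exact: le_trans (vnorm_mulmx_le_opnorm _ phi1) (A_lip hU1 hU2).
Qed.

End Fidelity.

Theorem lemma2 (R : realType) (n : nat) (A : 'M[R[i]]_n -> 'M[R[i]]_n) (K : R)
  (psi phi : 'cV[R[i]]_n)
  (hA1 : forall U, unitary U -> opnorm (A U) = 1)
  (hLip : forall U1 U2, unitary U1 -> unitary U2 ->
     opnorm (A U1 - A U2) <= K * opnorm (U1 - U2))
  (hpsi : vnorm psi = 1) (hphi : vnorm phi = 1) :
  forall U1 U2, unitary U1 -> unitary U2 ->
    `| fid A psi phi U1 - fid A psi phi U2 | <= (2 + 2 * K) * hsnorm (U1 - U2).
Proof.
move=> U1 U2 hU1 hU2; rewrite !fidE.
have amp_in01 := normc_amplitude_in01 hA1 hpsi hphi.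
apply: le_trans (sqr_dist_le (amp_in01 _ hU1) (amp_in01 _ hU2)) _.
have K_ge0 : 0 <= K := lipschitz_const_ge0 hpsi hLip.
have -> : 2 + 2 * K = 2 * (1 + K) by rewrite mulrDr mulr1.
rewrite -mulrA ler_pM2l ?ltr0n //.
apply: le_trans (ler_dist_normc _ _) _.
apply: le_trans (normc_amplitudeB_le hA1 hLip hpsi hphi hU1 hU2) _.
by apply: ler_wpM2l; [rewrite addr_ge0 | exact: opnorm_le_hsnorm hpsi _].
Qed.
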